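(* Let $s,u\geq 0$ and $m,v,w>0$. Let $\mathfrak{n}$ be the five-dimensional real Lie algebra with basis $\{E_1,\dots,E_5\}$ whose only non-vanishing brackets (up to antisymmetry) are $$[E_1,E_2]=mE_4+sE_5,\qquad [E_1,E_3]=uE_5,\qquad [E_1,E_4]=vE_5,\qquad [E_2,E_3]=wE_5.$$ Equip the corresponding simply connected nilpotent Lie group with the left-invariant Riemannian metric for which $\{E_1,\dots,E_5\}$ is orthonormal. Then this metric is an algebraic Ricci soliton if and only if $$s=u=0,\qquad v=m,\qquad w=\tfrac{\sqrt2}{2}m.$$ In that case $$c=-\tfrac74m^2,\qquad D=\mathrm{diag}\big(\tfrac34m^2,m^2,\tfrac32m^2,\tfrac74m^2,\tfrac52m^2\big),$$ where $D$ is written as a matrix with respect to the basis $\{E_1,\dots,E_5\}$.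
   Context: Let $G$ be a Lie group with Lie algebra $\mathfrak{g}$ and let $g$ be a left-invariant Riemannian metric on $G$. Let $\mathrm{Ric}$ denote the $(1,1)$ Ricci tensor of $g$, viewed as a linear endomorphism of $\mathfrak{g}$. The metric $g$ is an algebraic Ricci soliton if there are a real number $c$ and a derivation $D$ of $\mathfrak{g}$ such that $\mathrm{Ric}=c\,\mathrm{Id}+D$. The notation $\mathrm{diag}(a_1,\dots,a_5)$ denotes the diagonal matrix with these entries. *)

(* Left-invariant metrics on Lie groups are encoded at the
   Lie algebra level: g = R^n (column vectors) with an orthonormal basis
   e_0..e_(n-1), the metric being the standard inner product, and the Lie
   bracket given by structure constants C i j = [e_i, e_j]. *)
From HB Require Import structures.
From mathcomp Require Import all_boot all_order all_algebra.
Set Implicit Arguments. Unset Strict Implicit. Unset Printing Implicit Defensive.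
Import Order.TTheory GRing.Theory Num.Theory.
Local Open Scope ring_scope.

Section LieMetric.
Variable R : realFieldType.
Variable n : nat.

Definition ebase (k : 'I_n) : 'cV[R]_n := delta_mx k 0.

Definition ip (x y : 'cV[R]_n) : R := (x^T *m y) 0 0.

Definition lbr (C : 'I_n -> 'I_n -> 'cV[R]_n) (x y : 'cV[R]_n) : 'cV[R]_n :=
  \sum_(i < n) \sum_(j < n) (x i 0 * y j 0) *: C i j.

(* Levi-Civita connection of the left-invariant metric (Koszul formula):
   2 <nabla_x y, z> = <[x,y],z> - <[y,z],x> + <[z,x],y> *)
Definition lc_nabla C (x y : 'cV[R]_n) : 'cV[R]_n :=
  \col_(k < n) ((ip (lbr C x y) (ebase k) - ip (lbr C y (ebase k)) x
                 + ip (lbr C (ebase k) x) y) / 2).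

Definition curv C (x y z : 'cV[R]_n) : 'cV[R]_n :=
  lc_nabla C x (lc_nabla C y z) - lc_nabla C y (lc_nabla C x z)
  - lc_nabla C (lbr C x y) z.

Definition ric02 C (y z : 'cV[R]_n) : R :=
  \sum_(k < n) ip (curv C (ebase k) y z) (ebase k).

(* (1,1) Ricci tensor as an endomorphism (matrix acting on column vectors)
   w.r.t. the orthonormal basis *)
Definition ricci C : 'M[R]_n := \matrix_(i, j) ric02 C (ebase i) (ebase j).

Definition is_derivation C (D : 'M[R]_n) : Prop :=
  forall x y : 'cV[R]_n, D *m lbr C x y = lbr C (D *m x) y + lbr C x (D *m y).

Definition alg_ricci_soliton_with C (c : R) (D : 'M[R]_n) : Prop :=
  is_derivation C D /\ ricci C = c%:M + D.

Definition is_alg_ricci_soliton C : Prop :=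
  exists c D, alg_ricci_soliton_with C c D.

End LieMetric.

(* The five-dimensional nilpotent Lie algebra of the statement; E_1..E_5 are
   ebase 0 .. ebase 4. *)
Definition nC (R : realFieldType) (m s u v w : R) (i j : 'I_5) : 'cV[R]_5 :=
  let E4 := ebase R (@inord 4 3) in
  let E5 := ebase R (@inord 4 4) in
  match nat_of_ord i, nat_of_ord j with
  | 0, 1 => m *: E4 + s *: E5
  | 1, 0 => - (m *: E4 + s *: E5)
  | 0, 2 => u *: E5
  | 2, 0 => - (u *: E5)
  | 0, 3 => v *: E5
  | 3, 0 => - (v *: E5)
  | 1, 2 => w *: E5
  | 2, 1 => - (w *: E5)
  | _, _ => 0
  end.

(* In the orthonormal basis every quantity is a polynomial in the structure
   constants: the Koszul formula gives the Christoffel symbols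
   <nabla_{E_p} E_q, E_r> = (c_pq^r - c_qr^p + c_rp^q) / 2, hence the Ricci
   matrix, and being a derivation is a finite system of polynomial equations.
   For D := Ric - c Id, five of these equations already force m u v = 0,
   m s v = 0 and three linear relations between c, m^2, v^2, w^2, whose only
   solution with m, v, w > 0 is v = m, w^2 = m^2 / 2, c = -7/4 m^2;
   conversely for these values all 125 equations hold. *)
From HB Require Import structures.
From mathcomp Require Import all_boot all_order all_algebra.
From mathcomp Require Import ring lra.
Import Order.TTheory GRing.Theory Num.Theory.
Local Open Scope ring_scope.
Set Implicit Arguments.
Unset Strict Implicit.
Unset Printing Implicit Defensive.

Section StructureConstants.
Variable R : realFieldType.
Variable n : nat.
Variable C : 'I_n -> 'I_n -> 'cV[R]_n.
Local Notation c p q r := (C p q r 0).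

Lemma ebaseE (k i : 'I_n) : ebase R k i 0 = (i == k)%:R.
Proof. by rewrite /ebase mxE eqxx andbT. Qed.

Lemma sumr_mul_eq (F : 'I_n -> R) k : \sum_i F i * (i == k)%:R = F k.
Proof.
rewrite (bigD1 k) //= eqxx mulr1 big1 ?addr0 // => j /negbTE ->.
by rewrite mulr0.
Qed.

Lemma ipE (x y : 'cV[R]_n) : ip x y = \sum_k x k 0 * y k 0.
Proof. by rewrite /ip mxE; apply: eq_bigr => k _; rewrite mxE. Qed.

Lemma ip_ebase (x : 'cV[R]_n) k : ip x (ebase R k) = x k 0.
Proof.
by rewrite ipE; under eq_bigr do rewrite ebaseE; rewrite sumr_mul_eq.
Qed.

Lemma mulmx_ebase (D : 'M[R]_n) q p : (D *m ebase R q) p 0 = D p q.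
Proof.
by rewrite mxE; under eq_bigr do rewrite ebaseE; rewrite sumr_mul_eq.
Qed.

Lemma lbrE (x y : 'cV[R]_n) k :
  lbr C x y k 0 = \sum_i \sum_j x i 0 * y j 0 * c i j k.
Proof.
rewrite /lbr summxE; apply: eq_bigr => i _.
by rewrite summxE; apply: eq_bigr => j _; rewrite mxE.
Qed.

Lemma lbr_ebase_r (x : 'cV[R]_n) q k :
  lbr C x (ebase R q) k 0 = \sum_p x p 0 * c p q k.
Proof.
rewrite lbrE; apply: eq_bigr => p _.
under eq_bigr do rewrite ebaseE -mulrA [_%:R * _]mulrC mulrA.
by rewrite sumr_mul_eq.
Qed.

Lemma lbr_ebase_l (x : 'cV[R]_n) p k :
  lbr C (ebase R p) x k 0 = \sum_q x q 0 * c p q k.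
Proof.
rewrite lbrE exchange_big /=; apply: eq_bigr => q _.
under eq_bigr do rewrite ebaseE [_%:R * _]mulrC -mulrA [_%:R * _]mulrC mulrA.
by rewrite sumr_mul_eq.
Qed.

Lemma lbr_ebase p q k : lbr C (ebase R p) (ebase R q) k 0 = c p q k.
Proof.
rewrite lbr_ebase_l; under eq_bigr do rewrite ebaseE mulrC.
by rewrite sumr_mul_eq.
Qed.

Definition christoffel p q r := (c p q r - c q r p + c r p q) / 2.

Lemma lc_nablaE (x y : 'cV[R]_n) k :
  lc_nabla C x y k 0 = \sum_i \sum_j x i 0 * y j 0 * christoffel i j k.
Proof.
rewrite /lc_nabla mxE ip_ebase !ipE.
have brack_yk : \sum_l lbr C y (ebase R k) l 0 * x l 0
    = \sum_i \sum_j x i 0 * y j 0 * c j k i.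
  under eq_bigr do rewrite lbr_ebase_r big_distrl.
  rewrite [RHS]exchange_big /= exchange_big /=; apply: eq_bigr => j _.
  by apply: eq_bigr => i _; ring.
have brack_kx : \sum_l lbr C (ebase R k) x l 0 * y l 0
    = \sum_i \sum_j x i 0 * y j 0 * c k i j.
  under eq_bigr do rewrite lbr_ebase_l big_distrl.
  rewrite exchange_big /=; apply: eq_bigr => i _.
  by apply: eq_bigr => j _; ring.
rewrite brack_yk brack_kx lbrE /christoffel -sumrB -big_split /= mulr_suml.
apply: eq_bigr => i _; rewrite -sumrB -big_split /= mulr_suml.
by apply: eq_bigr => j _; ring.
Qed.

Lemma lc_nabla_ebase_l p (y : 'cV[R]_n) k :
  lc_nabla C (ebase R p) y k 0 = \sum_j y j 0 * christoffel p j k.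
Proof.
rewrite lc_nablaE exchange_big /=; apply: eq_bigr => j _.
under eq_bigr do rewrite ebaseE [_%:R * _]mulrC -!mulrA [_%:R * _]mulrC.
by rewrite -big_distrr /= sumr_mul_eq.
Qed.

Lemma lc_nabla_ebase_r (x : 'cV[R]_n) q k :
  lc_nabla C x (ebase R q) k 0 = \sum_i x i 0 * christoffel i q k.
Proof.
rewrite lc_nablaE; apply: eq_bigr => i _.
under eq_bigr do rewrite ebaseE -mulrA [_%:R * _]mulrC mulrA.
by rewrite sumr_mul_eq.
Qed.

Lemma lc_nabla_ebase p q k :
  lc_nabla C (ebase R p) (ebase R q) k 0 = christoffel p q k.
Proof.
rewrite lc_nabla_ebase_l; under eq_bigr do rewrite ebaseE mulrC.
by rewrite sumr_mul_eq.
Qed.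

Lemma ricciE a b : ricci C a b =
  \sum_k \sum_j (christoffel a b j * christoffel k j k
                 - christoffel k b j * christoffel a j k
                 - c k a j * christoffel j b k).
Proof.
rewrite /ricci mxE /ric02; apply: eq_bigr => k _.
rewrite ip_ebase /curv ![(_ - _ : 'cV[R]_n) k 0]mxE ![(- _ : 'cV[R]_n) k 0]mxE.
rewrite lc_nabla_ebase_l lc_nabla_ebase_l lc_nabla_ebase_r.
under eq_bigr do rewrite lc_nabla_ebase.
under [X in _ - X - _]eq_bigr do rewrite lc_nabla_ebase.
under [X in _ - _ - X]eq_bigr do rewrite lbr_ebase.
by rewrite -!sumrB.
Qed.

Definition derivation_eq (D : 'M[R]_n) i j k :=
  \sum_r D k r * c i j r = \sum_p D p i * c p j k + \sum_p D p j * c i p k.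

Lemma is_derivation_ebase (D : 'M[R]_n) :
  is_derivation C D -> forall i j k, derivation_eq D i j k.
Proof.
move=> derD i j k.
have := congr1 (fun M : 'cV[R]_n => M k 0) (derD (ebase R i) (ebase R j)).
rewrite /= !mxE lbr_ebase_r lbr_ebase_l => E.
transitivity (\sum_r D k r * lbr C (ebase R i) (ebase R j) r 0).
  by apply: eq_bigr => r _; rewrite lbr_ebase.
by rewrite E; congr (_ + _); apply: eq_bigr => p _; rewrite mulmx_ebase.
Qed.

Lemma is_derivationP (D : 'M[R]_n) :
  is_derivation C D <-> forall i j k, derivation_eq D i j k.
Proof.
split; first exact: is_derivation_ebase.
move=> eqD x y; apply/matrixP => k l; rewrite [l]ord1 !mxE !lbrE.
have lhs : \sum_r D k r * lbr C x y r 0 =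
    \sum_p \sum_q x p 0 * y q 0 * (\sum_r D k r * c p q r).
  under eq_bigr do rewrite lbrE big_distrr.
  rewrite exchange_big /=; apply: eq_bigr => p _.
  under eq_bigr do rewrite big_distrr.
  rewrite exchange_big /=; apply: eq_bigr => q _.
  by rewrite big_distrr /=; apply: eq_bigr => r _; ring.
have rhs_l : \sum_p \sum_q (D *m x) p 0 * y q 0 * c p q k =
    \sum_p \sum_q x p 0 * y q 0 * (\sum_r D r p * c r q k).
  under eq_bigr => p _ do under eq_bigr => q _ do rewrite mxE !big_distrl.
  under eq_bigr => p _ do rewrite exchange_big.
  rewrite exchange_big /=; apply: eq_bigr => r _.
  rewrite exchange_big /=; apply: eq_bigr => q _.
  by rewrite big_distrr /=; apply: eq_bigr => p _; ring.
have rhs_r : \sum_p \sum_q x p 0 * (D *m y) q 0 * c p q k =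
    \sum_p \sum_q x p 0 * y q 0 * (\sum_r D r q * c p r k).
  apply: eq_bigr => p _.
  under eq_bigr => q _ do rewrite mxE big_distrr !big_distrl.
  rewrite exchange_big /=; apply: eq_bigr => r _.
  by rewrite big_distrr /=; apply: eq_bigr => q _; ring.
rewrite lhs rhs_l rhs_r -big_split /=; apply: eq_bigr => p _.
by rewrite -big_split /=; apply: eq_bigr => q _; rewrite eqD; ring.
Qed.

Lemma alg_ricci_soliton_withP c (D : 'M[R]_n) :
  alg_ricci_soliton_with C c D <->
  D = ricci C - c%:M /\ is_derivation C (ricci C - c%:M).
Proof.
split=> [[derD ->] | [-> derD]]; first by rewrite addrC addKr.
by split=> //; rewrite addrC subrK.
Qed.

End StructureConstants.

Lemma sqrt2_half_mulP (R : rcfType) (m w : R) : 0 <= m -> 0 <= w ->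
  w ^+ 2 = m ^+ 2 / 2 <-> w = Num.sqrt 2 / 2 * m.
Proof.
move=> m_ge0 w_ge0.
have sqr_rhs : (Num.sqrt 2 / 2 * m) ^+ 2 = m ^+ 2 / 2.
  by rewrite !exprMn sqr_sqrtr ?ler0n //; field.
split=> [w2 | ->] //; apply/eqP.
have rhs_ge0 : 0 <= Num.sqrt 2 / 2 * m.
  by rewrite !mulr_ge0 ?sqrtr_ge0 ?invr_ge0 ?ler0n.
by rewrite -(@eqrXn2 _ 2 _ _ isT w_ge0 rhs_ge0) w2 sqr_rhs.
Qed.

Section FiveDimensional.
Variable R : realFieldType.
Variables m s u v w : R.

(* Indices are 0-based: [k] stands for E_(k+1). *)
Definition nC_const (i j k : nat) : R :=
  match i, j, k with
  | 0, 1, 3 => m | 0, 1, 4 => s | 1, 0, 3 => - m | 1, 0, 4 => - s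
  | 0, 2, 4 => u | 2, 0, 4 => - u | 0, 3, 4 => v | 3, 0, 4 => - v
  | 1, 2, 4 => w | 2, 1, 4 => - w | _, _, _ => 0 end.

Lemma nCE (i j k : 'I_5) : nC m s u v w i j k 0 = nC_const i j k.
Proof.
case: i => [[|[|[|[|[|i]]]]] Hi] //; case: j => [[|[|[|[|[|j]]]]] Hj] //;
case: k => [[|[|[|[|[|k]]]]] Hk] //;
rewrite /nC /nC_const /= ?mxE ?ebaseE -?val_eqE /= ?inordK //=; ring.
Qed.

Definition nC_ricci (a b : nat) : R :=
  match a, b with
  | 0, 0 => - (v ^+ 2 + u ^+ 2 + s ^+ 2 + m ^+ 2) / 2
  | 0, 1 | 1, 0 => - (u * w) / 2
  | 0, 2 | 2, 0 => s * w / 2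
  | 1, 1 => - (w ^+ 2 + s ^+ 2 + m ^+ 2) / 2
  | 1, 2 | 2, 1 => - (s * u) / 2
  | 1, 3 | 3, 1 => - (s * v) / 2
  | 2, 2 => - (w ^+ 2 + u ^+ 2) / 2
  | 2, 3 | 3, 2 => - (u * v) / 2
  | 3, 3 => (m ^+ 2 - v ^+ 2) / 2
  | 3, 4 | 4, 3 => m * s / 2
  | 4, 4 => (w ^+ 2 + v ^+ 2 + u ^+ 2 + s ^+ 2) / 2
  | _, _ => 0 end.

Lemma ricci_nCE (a b : 'I_5) : ricci (nC m s u v w) a b = nC_ricci a b.
Proof.
rewrite ricciE /christoffel.
under eq_bigr => k _ do under eq_bigr => j _ do rewrite !nCE.
rewrite !big_ord_recl !big_ord0.
case: a => [[|[|[|[|[|a]]]]] Ha] //; case: b => [[|[|[|[|[|b]]]]] Hb] //;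
by rewrite /= /nC_ricci; field.
Qed.

Definition nC_ricci_shift c (p q : nat) : R :=
  nC_ricci p q - (if p == q then c else 0).

Lemma ricci_nC_shiftE c (p q : 'I_5) :
  (ricci (nC m s u v w) - c%:M) p q = nC_ricci_shift c p q.
Proof.
rewrite [(_ - _ : 'M[R]_5) p q]mxE [(- _ : 'M[R]_5) p q]mxE [_%:M p q]mxE.
rewrite ricci_nCE /nC_ricci_shift -val_eqE.
by case: (val p == val q); rewrite ?mulr1n ?mulr0n.
Qed.

Definition nC_derivation_eq c (i j k : nat) : Prop :=
  \sum_(r < 5) nC_ricci_shift c k r * nC_const i j r =
  \sum_(p < 5) nC_ricci_shift c p i * nC_const p j k
  + \sum_(p < 5) nC_ricci_shift c p j * nC_const i p k.

Lemma is_derivation_nC_ricci_shiftP c :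
  is_derivation (nC m s u v w) (ricci (nC m s u v w) - c%:M)
  <-> forall i j k : 'I_5, nC_derivation_eq c i j k.
Proof.
rewrite is_derivationP /derivation_eq /nC_derivation_eq.
have entriesE i j k :
  [/\ \sum_r (ricci (nC m s u v w) - c%:M) k r * nC m s u v w i j r 0
        = \sum_(r < 5) nC_ricci_shift c k r * nC_const i j r,
      \sum_p (ricci (nC m s u v w) - c%:M) p i * nC m s u v w p j k 0
        = \sum_(p < 5) nC_ricci_shift c p i * nC_const p j k
    & \sum_p (ricci (nC m s u v w) - c%:M) p j * nC m s u v w i p k 0
        = \sum_(p < 5) nC_ricci_shift c p j * nC_const i p k].
  by split; apply: eq_bigr => r _; rewrite ricci_nC_shiftE nCE.
by split=> eqs i j k; move: (eqs i j k); have [-> -> ->] := entriesE i j k.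
Qed.

End FiveDimensional.

Lemma nC_soliton_constraints (R : rcfType) (m s u v w c : R) :
  0 < m -> 0 < v -> 0 < w ->
  is_derivation (nC m s u v w) (ricci (nC m s u v w) - c%:M) ->
  [/\ s = 0, u = 0, v = m & w = Num.sqrt 2 / 2 * m] /\ c = - (7 / 4) * m ^+ 2.
Proof.
move=> m_gt0 v_gt0 w_gt0 /is_derivation_nC_ricci_shiftP eqs.
have eq_at (i j k : nat) (Hi : (i < 5)%N) (Hj : (j < 5)%N) (Hk : (k < 5)%N) :=
  eqs (Ordinal Hi) (Ordinal Hj) (Ordinal Hk).
move: (eq_at 0 1 1 isT isT isT) (eq_at 0 1 2 isT isT isT)
  (eq_at 0 1 3 isT isT isT) (eq_at 0 3 4 isT isT isT) (eq_at 1 2 4 isT isT isT).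
rewrite /nC_derivation_eq !big_ord_recl !big_ord0 /= /nC_ricci_shift.
rewrite /nC_ricci /nC_const /= => E011 E012 E013 E034 E124.
have : m * (u * v) == 0 by apply/eqP; lra.
rewrite !mulf_eq0 (gt_eqF m_gt0) (gt_eqF v_gt0) orbF => /eqP u0.
have : m * (s * v) == 0 by apply/eqP; lra.
rewrite !mulf_eq0 (gt_eqF m_gt0) (gt_eqF v_gt0) orbF => /eqP s0.
subst s u.
have : m * (c + w ^+ 2 / 2 + 3 / 2 * m ^+ 2) == 0 by apply/eqP; lra.
rewrite mulf_eq0 (gt_eqF m_gt0) => /eqP c_m.
have : v * (c + w ^+ 2 / 2 + 3 / 2 * v ^+ 2) == 0 by apply/eqP; lra.
rewrite mulf_eq0 (gt_eqF v_gt0) => /eqP c_v.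
have : w * (c + 3 / 2 * w ^+ 2 + v ^+ 2 / 2 + m ^+ 2 / 2) == 0.
  by apply/eqP; lra.
rewrite mulf_eq0 (gt_eqF w_gt0) => /eqP c_w.
have vm : v = m.
  by apply/eqP; rewrite -(@eqrXn2 _ 2 _ _ isT (ltW v_gt0) (ltW m_gt0)); lra.
subst v.
have w2 : w ^+ 2 = m ^+ 2 / 2 by lra.
split; last by lra.
by split=> //; apply/(sqrt2_half_mulP (ltW m_gt0) (ltW w_gt0)).
Qed.

Lemma nC_soliton_derivation (R : realFieldType) (m w : R) :
  w ^+ 2 = m ^+ 2 / 2 ->
  is_derivation (nC m 0 0 m w) (ricci (nC m 0 0 m w) - (- (7 / 4) * m ^+ 2)%:M).
Proof.
move=> w2; apply/is_derivation_nC_ricci_shiftP.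
move=> [[|[|[|[|[|i]]]]] Hi] // [[|[|[|[|[|j]]]]] Hj] //
  [[|[|[|[|[|k]]]]] Hk] //;
by rewrite /nC_derivation_eq !big_ord_recl !big_ord0 /= /nC_ricci_shift
  /nC_ricci /nC_const /= ?w2; field.
Qed.

Lemma nC_soliton_derivationE (R : realFieldType) (m w : R) :
  w ^+ 2 = m ^+ 2 / 2 ->
  ricci (nC m 0 0 m w) - (- (7 / 4) * m ^+ 2)%:M =
  diag_mx (\row_(i < 5) [:: 3 / 4 * m ^+ 2; m ^+ 2; 3 / 2 * m ^+ 2;
                            7 / 4 * m ^+ 2; 5 / 2 * m ^+ 2]`_i).
Proof.
move=> w2; apply/matrixP => p q; rewrite ricci_nC_shiftE !mxE.
move: p q => [[|[|[|[|[|p]]]]] Hp] // [[|[|[|[|[|q]]]]] Hq] //;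
by rewrite /nC_ricci_shift /nC_ricci /= ?w2; field.
Qed.

Theorem mainTheorem8 (R : rcfType) (m s u v w : R) :
  0 <= s -> 0 <= u -> 0 < m -> 0 < v -> 0 < w ->
  (is_alg_ricci_soliton (nC m s u v w)
     <-> [/\ s = 0, u = 0, v = m & w = Num.sqrt 2 / 2 * m])
  /\
  ([/\ s = 0, u = 0, v = m & w = Num.sqrt 2 / 2 * m] ->
   forall (c : R) (D : 'M[R]_5),
     alg_ricci_soliton_with (nC m s u v w) c D ->
     c = - (7 / 4) * m ^+ 2 /\
     D = diag_mx (\row_(i < 5)
           [:: 3 / 4 * m ^+ 2; m ^+ 2; 3 / 2 * m ^+ 2; 7 / 4 * m ^+ 2;
               5 / 2 * m ^+ 2]`_i)).
Proof.
move=> _ _ m_gt0 v_gt0 w_gt0.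
have w2P := sqrt2_half_mulP (ltW m_gt0) (ltW w_gt0).
split.
  split=> [[c [D /alg_ricci_soliton_withP [_ derD]]] | [-> -> -> /w2P w2]].
    by have [] := nC_soliton_constraints m_gt0 v_gt0 w_gt0 derD.
  exists (- (7 / 4) * m ^+ 2), (ricci (nC m 0 0 m w) - (- (7 / 4) * m ^+ 2)%:M).
  by apply/alg_ricci_soliton_withP; split=> //; apply: nC_soliton_derivation.
move=> _ c D /alg_ricci_soliton_withP [-> derD].
have [[-> -> -> /w2P w2] ->] := nC_soliton_constraints m_gt0 v_gt0 w_gt0 derD.
by split=> //; apply: nC_soliton_derivationE.
Qed.
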